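(* The asymptotic existential $L_{\mathrm{rings}}$-theory of $\{\mathbb{F}_p[t]/(t^n):n\in\mathbb{N}\}$ equals the existential $L_{\mathrm{rings}}$-theory of the ring $\mathbb{F}_p[t^{1/\infty}]/(t)$.
   Context: $\mathbb{F}_p[t^{1/\infty}]=\varinjlim_n\mathbb{F}_p[t^{1/n}]$ is the direct limit of the polynomial rings $\mathbb{F}_p[t^{1/n}]$, ordered by divisibility of $n$, along the natural inclusions $\mathbb{F}_p[t^{1/n}]\hookrightarrow\mathbb{F}_p[t^{1/m}]$ for $n\mid m$. The ring $\mathbb{F}_p[t^{1/\infty}]/(t)$ is its quotient by the ideal generated by $t$. The asymptotic existential theory of a class is the set of existential sentences true in all but finitely many members. *)

From HB Require Import structures.
From mathcomp Require Import all_boot all_order all_algebra.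
From mathcomp Require Import finmap.
From mathcomp.multinomials Require Import monalg.

Set Implicit Arguments.
Unset Strict Implicit.
Unset Printing Implicit Defensive.

Import Order.TTheory GRing.Theory Num.Theory.
Local Open Scope ring_scope.

Inductive rterm : Type :=
  | RVar of nat
  | RZero
  | ROne
  | RAdd of rterm & rterm
  | ROpp of rterm
  | RMul of rterm & rterm.

Inductive qfform : Type :=
  | FEq  of rterm & rterm
  | FNot of qfform
  | FAnd of qfform & qfform
  | FOr  of qfform & qfform.

Fixpoint eval_rterm (R : pzRingType) (e : nat -> R) (t : rterm) : R :=
  match t with
  | RVar i => e i
  | RZero => 0
  | ROne => 1
  | RAdd t1 t2 => eval_rterm e t1 + eval_rterm e t2
  | ROpp t1 => - eval_rterm e t1
  | RMul t1 t2 => eval_rterm e t1 * eval_rterm e t2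
  end.

Fixpoint qf_holds (R : pzRingType) (e : nat -> R) (f : qfform) : Prop :=
  match f with
  | FEq t1 t2 => eval_rterm e t1 = eval_rterm e t2
  | FNot f1 => ~ qf_holds e f1
  | FAnd f1 f2 => qf_holds e f1 /\ qf_holds e f2
  | FOr f1 f2 => qf_holds e f1 \/ qf_holds e f2
  end.

(* An existential L_rings-sentence  exists x_0 ... x_k, phi(x_0,...,x_k)    *)
(* (phi quantifier-free, k at least every variable index occurring in phi)  *)
(* is represented by its quantifier-free matrix phi; it holds in the ring R *)
(* iff some assignment of the variables satisfies phi.                      *)
Definition exsentence := qfform.

Definition ex_holds (R : pzRingType) (phi : exsentence) : Prop :=
  exists e : nat -> R, qf_holds e phi.

Definition ex_theory (R : pzRingType) : exsentence -> Prop :=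
  fun phi => ex_holds R phi.

Definition asymptotic_ex_theory (A : nat -> pzRingType) : exsentence -> Prop :=
  fun phi => exists N : nat, forall n : nat, (N <= n)%N -> ex_holds (A n) phi.

(* {poly %/ q} is MathComp's quotient ring R[X]/(q) (for q monic of size    *)
(* > 1, i.e. here n >= 1).                                                  *)
Definition Fpt_mod_tn (p n : nat) : pzRingType :=
  {poly %/ ('X^n : {poly 'F_p})}.

(* The ring F_p[t^{1/oo}] = colim_n F_p[t^{1/n}], realized as the monoid    *)
(* algebra F_p[Q_{>=0}] (the element t^q, q in Q_{>=0}, being the monomial  *)
(* of exponent q), and its quotient by the ideal (t).                       *)

Definition qnn := {q : rat | 0 <= q}.
HB.instance Definition _ := [Choice of qnn by <:].

Definition qnn0 : qnn := exist _ 0 (lexx 0).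

Lemma qnn_add_proof (a b : qnn) : 0 <= sval a + sval b.
Proof. by apply: addr_ge0; [exact: (svalP a) | exact: (svalP b)]. Qed.

Definition qnn_add (a b : qnn) : qnn := exist _ (sval a + sval b) (qnn_add_proof a b).

Lemma qnn_eqP (a b : qnn) : sval a = sval b -> a = b.
Proof. by move=> h; apply: val_inj. Qed.

Lemma qnn_addA : associative qnn_add.
Proof. by move=> a b c; apply: qnn_eqP; rewrite /= addrA. Qed.
Lemma qnn_add0 : left_id qnn0 qnn_add.
Proof. by move=> a; apply: qnn_eqP; rewrite /= add0r. Qed.
Lemma qnn_addr0 : right_id qnn0 qnn_add.
Proof. by move=> a; apply: qnn_eqP; rewrite /= addr0. Qed.
Lemma qnn_addC : commutative qnn_add.
Proof. by move=> a b; apply: qnn_eqP; rewrite /= addrC. Qed.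
Lemma qnn_unit (a b : qnn) : qnn_add a b = qnn0 -> a = qnn0 /\ b = qnn0.
Proof.
move=> /(congr1 sval) /= /eqP; rewrite paddr_eq0; [|exact: (svalP a)|exact: (svalP b)].
by case/andP=> /eqP ha /eqP hb; split; apply: qnn_eqP.
Qed.

HB.instance Definition _ :=
  Choice_isMonomialDef.Build qnn qnn_addA qnn_add0 qnn_addr0 qnn_unit.
HB.instance Definition _ := MonomialDef_isConomialDef.Build qnn qnn_addC.

Definition Fpt_root_inf (p : nat) := {malg 'F_p[qnn]}.

(* The ideal (t) of F_p[t^{1/oo}]: exactly the elements all of whose        *)
(* monomials t^q have q >= 1 (see also lemma mem_t_ideal below).            *)
Definition t_ideal (p : nat) : {pred Fpt_root_inf p} :=
  fun f => all (fun q : qnn => 1 <= sval q) (msupp f).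
Arguments t_ideal p : clear implicits.

Lemma t_ideal_closed (p : nat) : idealr_closed (t_ideal p).
Proof.
split.
- by rewrite /t_ideal unfold_in /= msupp0.
- rewrite /t_ideal unfold_in /=.
  have -> : msupp (1 : Fpt_root_inf p) = [fset qnn0]%fset.
    by rewrite -mpolyC1E msuppC oner_eq0.
  by apply/allP => /(_ qnn0 (fset11 _)); rewrite /= ler10.
- move=> a u v; rewrite /t_ideal !unfold_in /= => /allP hu /allP hv.
  apply/allP => k /(fsubsetP (msuppD_le _ _)); rewrite in_fsetU => /orP [].
    move=> /msuppM_le [k1 [k2 [_ k2u ->]]] /=.
    apply: (le_trans (hu _ k2u)); rewrite lerDr; exact: (svalP k1).
  exact: hv.
Qed.

HB.instance Definition _ (p : nat) :=
  isIdealr.Build (Fpt_root_inf p) (t_ideal p) (t_ideal_closed p).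

Definition Fpt_root_inf_mod_t (p : nat) : pzRingType :=
  {ideal_quot (t_ideal p)}.

(* Sanity check: t_ideal p is exactly the principal ideal (t) = t * F_p[t^{1/oo}]. *)
Definition qnn1 : qnn := exist _ 1 ler01.

Definition tgen (p : nat) : Fpt_root_inf p := << (1 : 'F_p) *g qnn1 >>.

Definition qshift (k : qnn) : qnn := insubd qnn0 (sval k - 1).

Lemma qshiftK (k : qnn) : 1 <= sval k -> qnn_add qnn1 (qshift k) = k.
Proof.
move=> hk; apply: qnn_eqP; rewrite /= /qshift val_insubd subr_ge0 hk.
by rewrite addrC subrK.
Qed.

Lemma mem_t_ideal (p : nat) (f : Fpt_root_inf p) :
  f \in t_ideal p <-> exists g : Fpt_root_inf p, f = tgen p * g.
Proof.
split.
  rewrite /t_ideal unfold_in /= => /allP h.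
  exists (\sum_(k <- msupp f) << f@_k *g qshift k >>).
  rewrite big_distrr /= {1}(monalgE f); apply: eq_big_seq => k kf.
  rewrite malgM_def fgmulUU mul1r; congr (<< _ *g _ >>).
  by symmetry; exact: (qshiftK (h k kf)).
move=> [g ->]; rewrite /t_ideal unfold_in /=; apply/allP => k.
move=> /msuppM_le [k1 [k2 [k1t _ ->]]].
move: k1t; rewrite /tgen msuppU oner_eq0 in_fset1 => /eqP -> /=.
by rewrite lerDl; exact: (svalP k2).
Qed.

From HB Require Import structures.
From mathcomp Require Import all_boot all_order all_algebra.
From mathcomp Require Import finmap zify.
From mathcomp.multinomials Require Import monalg.

Set Implicit Arguments.
Unset Strict Implicit.
Unset Printing Implicit Defensive.

Import Order.TTheory GRing.Theory Num.Theory.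
Local Open Scope ring_scope.

(* For D >= 1 the truncated polynomial ring F_p[X]/(X^D) embeds into
   F_p[t^{1/oo}]/(t) by X |-> t^{1/D}, and into F_p[t]/(t^n) by X |-> t^a
   whenever a(D-1) < n <= aD, which some a achieves as soon as n >= D^2.
   Two ring maps with the same kernel satisfy the same quantifier-free
   formulas on corresponding tuples.  Finitely many elements of
   F_p[t^{1/oo}]/(t) all lie in the image of one embedding (D a common
   denominator of their exponents), which gives one inclusion for every
   n >= D^2; the case D = n, a = 1 gives the other. *)

Fixpoint rterm_var_bound (t : rterm) : nat :=
  match t with
  | RVar i => i.+1
  | RZero | ROne => 0
  | RAdd t1 t2 | RMul t1 t2 => maxn (rterm_var_bound t1) (rterm_var_bound t2)
  | ROpp t1 => rterm_var_bound t1
  end.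

Fixpoint qf_var_bound (f : qfform) : nat :=
  match f with
  | FEq t1 t2 => maxn (rterm_var_bound t1) (rterm_var_bound t2)
  | FNot f1 => qf_var_bound f1
  | FAnd f1 f2 | FOr f1 f2 => maxn (qf_var_bound f1) (qf_var_bound f2)
  end.

Section Evaluation.
Variable R : pzRingType.

Lemma eval_rterm_ext (e e' : nat -> R) (t : rterm) :
  (forall i, (i < rterm_var_bound t)%N -> e i = e' i) ->
  eval_rterm e t = eval_rterm e' t.
Proof.
elim: t => [i|||t1 IH1 t2 IH2|t1 IH1|t1 IH1 t2 IH2] /= ee'; try exact: ee'.
all: by rewrite ?IH1 ?IH2 // => j ltj; apply: ee'; rewrite ?leq_max ltj ?orbT.
Qed.

Lemma qf_holds_ext (e e' : nat -> R) (f : qfform) :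
  (forall i, (i < qf_var_bound f)%N -> e i = e' i) ->
  qf_holds e f <-> qf_holds e' f.
Proof.
elim: f => [t1 t2|f1 IH1|f1 IH1 f2 IH2|f1 IH1 f2 IH2] /= ee'.
  by rewrite !(@eval_rterm_ext e e') // => j ltj; apply: ee';
    rewrite leq_max ltj ?orbT.
all: by rewrite IH1 ?IH2 // => j ltj; apply: ee'; rewrite ?leq_max ltj ?orbT.
Qed.

Lemma eval_rterm_rmorph (S : pzRingType) (f : {rmorphism R -> S})
    (e : nat -> R) (t : rterm) :
  eval_rterm (f \o e) t = f (eval_rterm e t).
Proof.
elim: t => [i|||t1 IH1 t2 IH2|t1 IH1|t1 IH1 t2 IH2] //=;
  by rewrite ?rmorph0 ?rmorph1 ?IH1 ?IH2 ?rmorphD ?rmorphN ?rmorphM.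
Qed.

Lemma qf_holds_rmorph_ker (S T : pzRingType)
    (f : {rmorphism R -> S}) (g : {rmorphism R -> T}) :
    (forall x, f x = 0 <-> g x = 0) ->
  forall (e : nat -> R) (phi : qfform),
  qf_holds (f \o e) phi <-> qf_holds (g \o e) phi.
Proof.
move=> kerfg e; elim=> [t1 t2|f1 IH1|f1 IH1 f2 IH2|f1 IH1 f2 IH2] /=.
  have rmorph_eq (U : pzRingType) (h : {rmorphism R -> U}) x y :
      h x = h y <-> h (x - y) = 0.
    by rewrite rmorphB; split=> [->|/eqP]; rewrite ?subrr // subr_eq0 => /eqP.
  by rewrite !eval_rterm_rmorph !rmorph_eq kerfg.
all: by rewrite IH1 ?IH2.
Qed.

End Evaluation.

Definition qnn_frac (D i : nat) : qnn :=
  exist _ (i%:R / D%:R) (divr_ge0 (ler0n _ i) (ler0n _ D)).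

Lemma qnn_frac_inj (D : nat) : (0 < D)%N -> injective (qnn_frac D).
Proof.
move=> D_gt0 i j /(congr1 sval) /= /(congr1 ( *%R^~ D%:R)).
by rewrite !divfK ?pnatr_eq0 -?lt0n // => /eqP; rewrite eqr_nat => /eqP.
Qed.

Lemma qnn_frac_lt1 (D i : nat) : (0 < D)%N -> (sval (qnn_frac D i) < 1) = (i < D)%N.
Proof. by move=> D_gt0; rewrite /= ltr_pdivrMr ?ltr0n // mul1r ltr_nat. Qed.

Definition qnn_den (k : qnn) : nat := `|denq (sval k)|.

Lemma qnn_den_gt0 (k : qnn) : (0 < qnn_den k)%N.
Proof. by rewrite absz_gt0 denq_neq0. Qed.

Lemma qnn_frac_lift (D : nat) (k : qnn) : (0 < D)%N -> (qnn_den k %| D)%N ->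
  exists i, qnn_frac D i = k.
Proof.
move=> D_gt0 /dvdnP [m defD].
have m_gt0 : (0 < m)%N by move: D_gt0; rewrite defD muln_gt0 => /andP [].
exists (`|numq (sval k)| * m)%N; apply: val_inj => /=.
rewrite defD !natrM [m%:R * _]mulrC -mulf_div divff ?mulr1 ?pnatr_eq0 -?lt0n //.
rewrite !natr_absz ger0_norm ?numq_ge0 ?(svalP k) // gtr0_norm ?denq_gt0 //.
exact: divq_num_den.
Qed.

Section RootsOfT.
Variable p : nat.
Local Notation A := (Fpt_root_inf p).

Definition troot (D : nat) : A := << qnn_frac D 1 >>.

Lemma troot_expn (D j : nat) : troot D ^+ j = << qnn_frac D j >>.
Proof.
elim: j => [|j IHj].
  by rewrite expr0; congr << _ >>; apply: val_inj; rewrite /= mul0r.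
rewrite exprS IHj malgM_def fgmulUU mul1r; congr << _ >>; apply: val_inj.
by rewrite /= -mulrDl -natrD add1n.
Qed.

Definition subst_troot (D : nat) : {rmorphism {poly 'F_p} -> A} :=
  horner_alg (troot D).

Lemma subst_troot_scale_Xn (D : nat) (c : 'F_p) (j : nat) :
  subst_troot D (c *: 'X^j) = << c *g qnn_frac D j >>.
Proof.
rewrite /= linearZ /= mulr_algl rmorphXn /= horner_algX troot_expn.
by apply/malgP => k; rewrite mcoeffZ !mcoeffU mulr_natr.
Qed.

Lemma mcoeff_subst_troot (D : nat) (P : {poly 'F_p}) (k : qnn) :
  (subst_troot D P)@_k = \sum_(i < size P) P`_i *+ (qnn_frac D i == k).
Proof.
rewrite -{1}[P]coefK poly_def rmorph_sum raddf_sum /=.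
by apply: eq_bigr => i _; rewrite subst_troot_scale_Xn mcoeffU.
Qed.

Lemma subst_troot_in_t_ideal (D : nat) (P : {poly 'F_p}) : (0 < D)%N ->
  subst_troot D P \in t_ideal p <-> (forall i, (i < D)%N -> P`_i = 0).
Proof.
move=> D_gt0; rewrite unfold_in /=; split.
- move=> /allP inT i ltiD; apply/eqP; apply: contraTT ltiD => Pi_neq0.
  have ltiP : (i < size P)%N.
    by rewrite ltnNge; apply: contra Pi_neq0 => /(nth_default 0) ->.
  suff /inT : qnn_frac D i \in msupp (subst_troot D P).
    by rewrite -qnn_frac_lt1 // -leNgt.
  rewrite -mcoeff_neq0 mcoeff_subst_troot (bigD1 (Ordinal ltiP)) //= eqxx mulr1n.
  rewrite big1 ?addr0 // => j neq_ji; case: eqP => // /qnn_frac_inj-/(_ D_gt0) eq_ji.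
  by case/eqP: neq_ji; apply: val_inj.
- move=> Plow; apply/allP => k; rewrite -mcoeff_neq0 mcoeff_subst_troot.
  apply: contraTT => /negbTE k_lt1; rewrite negbK; apply/eqP/big1 => i _.
  case: eqP => [eq_ik|]; last by rewrite mulr0n.
  by rewrite Plow ?mul0rn // -(qnn_frac_lt1 _ D_gt0) eq_ik ltNge k_lt1.
Qed.

Definition malg_den (f : A) : nat := \prod_(k <- msupp f) qnn_den k.

Lemma malg_den_gt0 (f : A) : (0 < malg_den f)%N.
Proof. by rewrite prodn_gt0 // => k; exact: qnn_den_gt0. Qed.

Lemma subst_troot_lift (D : nat) (f : A) : (0 < D)%N -> (malg_den f %| D)%N ->
  exists P, subst_troot D P = f.
Proof.
move=> D_gt0 den_dvdD; rewrite [f]monalgE big_seq.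
apply: (big_ind (fun g => exists P, subst_troot D P = g)).
- by exists 0; rewrite rmorph0.
- by move=> _ _ [P <-] [Q <-]; exists (P + Q); rewrite rmorphD.
- move=> k kf; have [|i <-] := qnn_frac_lift D_gt0 (dvdn_trans _ den_dvdD) (k := k).
    by rewrite /malg_den (big_rem _ kf) dvdn_mulr.
  by exists (f@_(qnn_frac D i) *: 'X^i); rewrite subst_troot_scale_Xn.
Qed.

Local Open Scope quotient_scope.

Definition troot_mod_t (D : nat) : {rmorphism {poly 'F_p} -> Fpt_root_inf_mod_t p} :=
  \pi_(Fpt_root_inf_mod_t p) \o subst_troot D.

Lemma troot_mod_t_eq0 (D : nat) (P : {poly 'F_p}) : (0 < D)%N ->
  troot_mod_t D P = 0 <-> (forall i, (i < D)%N -> P`_i = 0).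
Proof.
move=> D_gt0; rewrite -subst_troot_in_t_ideal //.
rewrite -[subst_troot D P]subr0 Quotient.idealrBE /=.
by split=> [->|/eqP ->]; rewrite ?rmorph0.
Qed.

Lemma troot_mod_t_lift (e : nat -> Fpt_root_inf_mod_t p) (b : nat) :
  exists2 D, (0 < D)%N &
    exists E : nat -> {poly 'F_p}, forall i, (i < b)%N -> troot_mod_t D (E i) = e i.
Proof.
pose D := (\prod_(i < b) malg_den (repr (e i)))%N.
have D_gt0 : (0 < D)%N by rewrite prodn_gt0 // => i; exact: malg_den_gt0.
have liftE i : exists P, (i < b)%N ==> (troot_mod_t D P == e i).
  case: (ltnP i b) => [ltib|]; last by exists 0; rewrite implyFb.
  have [|P defP] := subst_troot_lift D_gt0 (f := repr (e i)).
    by rewrite /D (bigD1 (Ordinal ltib)) //= dvdn_mulr.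
  by exists P; rewrite /= defP reprK eqxx.
exists D => //; exists (fun i => xchoose (liftE i)) => i ltib.
exact/eqP/(implyP (xchooseP (liftE i))).
Qed.

End RootsOfT.

Section TruncatedPolynomials.
Variable R : nzRingType.

Lemma in_qpoly_val (h : {poly R}) (x : {poly %/ h}) : in_qpoly h x = x.
Proof. by apply: val_inj; exact: in_qpoly_small (size_mk_monic x). Qed.

Lemma in_qpoly_Xn_eq0 (n : nat) (P : {poly R}) : (0 < n)%N ->
  in_qpoly 'X^n P = 0 <-> (forall i, (i < n)%N -> P`_i = 0).
Proof.
move=> n_gt0; split=> [/(congr1 val) | Plow]; last apply: val_inj;
  rewrite /= mk_monic_Xn prednK // -Pdiv.RingMonic.take_poly_rmodp.
- move/polyP=> take_n0 i ltin.
  by have := take_n0 i; rewrite coef_take_poly ltin coef0.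
- by apply/polyP=> i; rewrite coef_take_poly coef0; case: ifP => // /Plow.
Qed.

Lemma comp_poly_Xn_low_coefs (a n D : nat) (P : {poly R}) :
  (0 < a)%N -> (a * D.-1 < n <= a * D)%N ->
  (forall i, (i < n)%N -> (P \Po 'X^a)`_i = 0) <-> (forall i, (i < D)%N -> P`_i = 0).
Proof.
move=> a_gt0 /andP [lt_n le_n]; split=> [Pa_low i ltiD | Plow i ltin].
- have := Pa_low (a * i)%N; rewrite coef_comp_poly_Xn // dvdn_mulr // mulKn //.
  apply; apply: leq_ltn_trans lt_n; rewrite leq_mul2l -ltnS prednK ?ltiD ?orbT //.
  exact: leq_ltn_trans ltiD.
- rewrite coef_comp_poly_Xn //; case: ifP => // /dvdnP [j defi].
  by rewrite defi mulnK // Plow //; rewrite defi in ltin; nia.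
Qed.

End TruncatedPolynomials.

Definition tpow_mod_tn (p n a : nat) : {rmorphism {poly 'F_p} -> Fpt_mod_tn p n} :=
  in_qpoly 'X^n \o comp_poly 'X^a.

Lemma tpow_mod_tn_eq0 (p n a D : nat) (P : {poly 'F_p}) :
  (0 < a)%N -> (a * D.-1 < n <= a * D)%N ->
  tpow_mod_tn p n a P = 0 <-> (forall i, (i < D)%N -> P`_i = 0).
Proof.
move=> a_gt0 bounds; rewrite -(comp_poly_Xn_low_coefs _ a_gt0 bounds) /=.
by apply: in_qpoly_Xn_eq0; case/andP: bounds => /(leq_ltn_trans (leq0n _)).
Qed.

Lemma exists_scale_bracketing (D n : nat) : (0 < D)%N -> (D * D <= n)%N ->
  exists2 a, (0 < a)%N & (a * D.-1 < n <= a * D)%N.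
Proof.
move=> D_gt0 le_DD_n; exists (n %/ D).+1 => //.
have le_D_q : (D <= n %/ D)%N by rewrite leq_divRL.
have := divn_eq n D; have := ltn_mod n D; rewrite D_gt0 => lt_r.
set q := (n %/ D)%N in le_D_q *; set r := (n %% D)%N in lt_r * => defn.
apply/andP; split; nia.
Qed.

Theorem mainTheorem13 (p : nat) (hp : prime p) (phi : exsentence) :
  asymptotic_ex_theory (Fpt_mod_tn p) phi <->
  ex_theory (Fpt_root_inf_mod_t p) phi.
Proof.
split=> [[N holdsN] | [e holds_e]].
- pose n := maxn N 1; have n_gt0 : (0 < n)%N by rewrite leq_max orbT.
  have bounds : (1 * n.-1 < n <= 1 * n)%N by rewrite !mul1n ltn_predL n_gt0 /=.
  have [e holds_e] := holdsN n (leq_maxl N 1).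
  exists (troot_mod_t p n \o (fun i => val (e i))).
  rewrite (qf_holds_rmorph_ker (g := tpow_mod_tn p n 1)); last first.
    by move=> P; rewrite troot_mod_t_eq0 // (tpow_mod_tn_eq0 _ _ bounds).
  apply/(qf_holds_ext _)/holds_e => i _.
  by rewrite /= expr1 comp_polyXr in_qpoly_val.
- have [D D_gt0 [E liftE]] := troot_mod_t_lift e (qf_var_bound phi).
  exists (D * D)%N => n le_DD_n.
  have [a a_gt0 bounds] := exists_scale_bracketing D_gt0 le_DD_n.
  exists (tpow_mod_tn p n a \o E).
  rewrite -(qf_holds_rmorph_ker (f := troot_mod_t p D)); last first.
    by move=> P; rewrite troot_mod_t_eq0 // (tpow_mod_tn_eq0 _ a_gt0 bounds).
  exact/(qf_holds_ext liftE).
Qed.
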